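(* Let $K$ be an idempotent ordered TGP-$\omega$-valuation monoid, $AP$ a finite set of atomic propositions, $k\in K\setminus\{\mathbf{0},\mathbf{1}\}$ and $\varphi\in k\text{-}stLTL(K,AP)$. Then $\|\varphi\|$ is $k$-safe.
   Context: Idempotent ordered TGP-$\omega$-valuation monoid $(K,+,\cdot,Val^{\omega},\mathbf{0},\mathbf{1})$: complete (infinitary sums over arbitrary index sets with the usual axioms), idempotent monoid $(K,+,\mathbf{0})$, totally ordered by the natural order $k\le k'$ iff $k'=k'+k$, with $Val^{\omega}$ from finitely-valued sequences in $K$ to $K$ and a product $\cdot$ with zero $\mathbf{0}$ and unit $\mathbf{1}$, such that $Val^{\omega}=\mathbf{0}$ if some entry is $\mathbf{0}$, $Val^{\omega}(\mathbf{1}^{\omega})=\mathbf{1}$, $\sum_I(k\cdot\mathbf{1})=k\cdot\sum_I\mathbf{1}$, $Val^{\omega}$ distributes over finite sums of families lying entirely in $L\setminus\{\mathbf{0},\mathbf{1}\}$ or entirely in $\{\mathbf{0},\mathbf{1}\}$ ($L\subseteq K$ finite), and $Val^{\omega}(\mathbf{1},k_1,\dots)=Val^{\omega}(k_1,\dots)$, $Val^{\omega}(k,\mathbf{1},\dots)=k$, $k\le\mathbf{1}$, $k_i\ge k\ \forall i\Rightarrow Val^{\omega}((k_i)_i)\ge k$. Weighted LTL over $AP$ and $K$: $\varphi::=k\mid a\mid\neg a\mid\varphi\vee\varphi\mid\varphi\wedge\varphi\mid\bigcirc\varphi\mid\varphi U\varphi\mid\square\varphi$, with semantics $\|\varphi\|:(\mathcal{P}(AP))^{\omega}\to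 K$: $(\|k\|,w)=k$; $(\|a\|,w)=\mathbf{1}$ if $a\in w(0)$ else $\mathbf{0}$; $\neg a$ dually; $\vee\mapsto+$, $\wedge\mapsto\cdot$ pointwise; $(\|\bigcirc\varphi\|,w)=(\|\varphi\|,w_{\ge1})$; $(\|\varphi U\psi\|,w)=\sum_{i\ge0}Val^{\omega}((\|\varphi\|,w_{\ge0}),\dots,(\|\varphi\|,w_{\ge i-1}),(\|\psi\|,w_{\ge i}),\mathbf{1},\mathbf{1},\dots)$; $(\|\square\varphi\|,w)=Val^{\omega}(((\|\varphi\|,w_{\ge i}))_{i\ge0})$. $true:=\mathbf{1}$, $\varphi\tilde U\psi:=\square\varphi\vee(\varphi U\psi)$. $sbLTL(K,AP)$: $\varphi::=true\mid a\mid\neg a\mid\varphi\vee\varphi\mid\varphi\wedge\varphi\mid\bigcirc\varphi\mid\varphi\tilde U\varphi\mid\square\varphi$. $L_k=\{k'\in K\mid k'\ge k\}$. $k\text{-}stLTL(K,AP)$ consists of formulas $\bigvee_{1\le i\le n}(k_i\wedge\varphi_i)$ with $k_i\in L_k\setminus\{\mathbf{0},\mathbf{1}\}$, $\varphi_i\in sbLTL(K,AP)$. For $k\in K\setminus\{\mathbf{0},\mathbf{1}\}$, a series $s:(\mathcal{P}(AP))^{\omega}\to K$ is $k$-safe if for every $w$: whenever for every $i>0$ there is $u$ with $(s,w_{<i}u)\ge k$ ($w_{<i}$ the length-$i$ prefix), then $(s,w)\ge k$. *)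

From Stdlib Require Import List Arith.
Import ListNotations.

Definition fin_valued {K : Type} (s : nat -> K) : Prop :=
  exists l : list K, forall i, In (s i) l.

Definition finite_type (T : Type) : Prop := exists l : list T, forall x, In x l.

Record TGPValMonoid (K : Type) := {
  plus : K -> K -> K;
  zero : K;
  one  : K;
  mul  : K -> K -> K;
  Val  : (nat -> K) -> K;        (* only constrained on finitely-valued sequences *)
  Sum  : forall I : Type, (I -> K) -> K;

  plus_assoc : forall a b c, plus a (plus b c) = plus (plus a b) c;
  plus_comm  : forall a b, plus a b = plus b a;
  plus_zero_l : forall a, plus zero a = a;
  plus_idem  : forall a, plus a a = a;

  sum_empty : forall (I : Type) (f : I -> K), (I -> False) -> Sum I f = zero;
  sum_single : forall (I : Type) (i0 : I) (f : I -> K),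
      (forall i, i = i0) -> Sum I f = f i0;
  sum_pair : forall f : bool -> K, Sum bool f = plus (f true) (f false);
  sum_partition : forall (J : Type) (I : J -> Type) (f : forall j, I j -> K),
      Sum {j : J & I j} (fun p => f (projT1 p) (projT2 p))
      = Sum J (fun j => Sum (I j) (f j));
  sum_bij : forall (I I' : Type) (g : I' -> I) (h : I -> I') (f : I -> K),
      (forall x, g (h x) = x) -> (forall y, h (g y) = y) ->
      Sum I' (fun y => f (g y)) = Sum I f;

  (* totality of the natural order  k <= k'  iff  k' = k' + k *)
  le_total : forall a b, b = plus b a \/ a = plus a b;

  mul_zero_l : forall a, mul zero a = zero;
  mul_zero_r : forall a, mul a zero = zero;
  mul_one_l : forall a, mul one a = a;
  mul_one_r : forall a, mul a one = a;

  val_zero : forall s, fin_valued s -> (exists i, s i = zero) -> Val s = zero;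
  val_ones : Val (fun _ => one) = one;
  sum_scal : forall (I : Type) (k : K),
      Sum I (fun _ => mul k one) = mul k (Sum I (fun _ => one));
  val_distr : forall (L : list K) (I : nat -> Type) (c : forall j, I j -> K),
      (forall j, finite_type (I j)) ->
      ((forall j x, In (c j x) L /\ c j x <> zero /\ c j x <> one) \/
       (forall j x, c j x = zero \/ c j x = one)) ->
      Val (fun j => Sum (I j) (c j))
      = Sum (forall j, I j) (fun f => Val (fun j => c j (f j)));
  val_shift : forall s, fin_valued s ->
      Val (fun n => match n with 0 => one | S m => s m end) = Val s;
  val_head : forall k, Val (fun n => match n with 0 => k | S _ => one end) = k;
  le_one : forall k, one = plus one k;
  val_lb : forall (k : K) (s : nat -> K), fin_valued s ->
      (forall i, s i = plus (s i) k) -> Val s = plus (Val s) k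
}.

Arguments plus {K} _ _ _.
Arguments zero {K} _.
Arguments one {K} _.
Arguments mul {K} _ _ _.
Arguments Val {K} _ _.
Arguments Sum {K} _ _ _.

Definition kle {K} (M : TGPValMonoid K) (a b : K) : Prop := b = plus M b a.

(* Words over P(AP): a letter is a subset of AP given by its characteristic function. *)
Definition word (AP : Type) := nat -> (AP -> bool).
Definition suffix {AP} (w : word AP) (i : nat) : word AP := fun n => w (n + i).

Inductive formula (K AP : Type) : Type :=
| FConst : K -> formula K AP
| FAtom : AP -> formula K AP
| FNAtom : AP -> formula K AP
| FOr : formula K AP -> formula K AP -> formula K AP
| FAnd : formula K AP -> formula K AP -> formula K AP
| FNext : formula K AP -> formula K AP
| FUntil : formula K AP -> formula K AP -> formula K AP
| FBox : formula K AP -> formula K AP.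

Arguments FConst {K AP} _.
Arguments FAtom {K AP} _.
Arguments FNAtom {K AP} _.
Arguments FOr {K AP} _ _.
Arguments FAnd {K AP} _ _.
Arguments FNext {K AP} _.
Arguments FUntil {K AP} _ _.
Arguments FBox {K AP} _.

Fixpoint sem {K AP} (M : TGPValMonoid K) (phi : formula K AP) (w : word AP) : K :=
  match phi with
  | FConst k => k
  | FAtom a => if w 0 a then one M else zero M
  | FNAtom a => if w 0 a then zero M else one M
  | FOr p q => plus M (sem M p w) (sem M q w)
  | FAnd p q => mul M (sem M p w) (sem M q w)
  | FNext p => sem M p (suffix w 1)
  | FUntil p q =>
      Sum M nat (fun i =>
        Val M (fun j => if j <? i then sem M p (suffix w j)
                        else if j =? i then sem M q (suffix w i)
                        else one M))
  | FBox p => Val M (fun i => sem M p (suffix w i))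
  end.

Definition FTrue {K AP} (M : TGPValMonoid K) : formula K AP := FConst (one M).
Definition FRelU {K AP} (p q : formula K AP) : formula K AP := FOr (FBox p) (FUntil p q).

Inductive sbLTL {K AP} (M : TGPValMonoid K) : formula K AP -> Prop :=
| sb_true : sbLTL M (FTrue M)
| sb_atom : forall a, sbLTL M (FAtom a)
| sb_natom : forall a, sbLTL M (FNAtom a)
| sb_or : forall p q, sbLTL M p -> sbLTL M q -> sbLTL M (FOr p q)
| sb_and : forall p q, sbLTL M p -> sbLTL M q -> sbLTL M (FAnd p q)
| sb_next : forall p, sbLTL M p -> sbLTL M (FNext p)
| sb_relU : forall p q, sbLTL M p -> sbLTL M q -> sbLTL M (FRelU p q)
| sb_box : forall p, sbLTL M p -> sbLTL M (FBox p).

Fixpoint bigOr {K AP} (d : K * formula K AP) (l : list (K * formula K AP)) : formula K AP :=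
  match l with
  | [] => FAnd (FConst (fst d)) (snd d)
  | d' :: l' => FOr (FAnd (FConst (fst d)) (snd d)) (bigOr d' l')
  end.

Definition kstLTL {K AP} (M : TGPValMonoid K) (k : K) (phi : formula K AP) : Prop :=
  exists (d : K * formula K AP) (l : list (K * formula K AP)),
    phi = bigOr d l /\
    forall p, In p (d :: l) ->
      kle M k (fst p) /\ fst p <> zero M /\ fst p <> one M /\ sbLTL M (snd p).

Definition prefix_concat {AP} (w : word AP) (i : nat) (u : word AP) : word AP :=
  fun n => if n <? i then w n else u (n - i).

Definition k_safe {K AP} (M : TGPValMonoid K) (k : K) (s : word AP -> K) : Prop :=
  forall w : word AP,
    (forall i, 0 < i -> exists u : word AP, kle M k (s (prefix_concat w i u))) ->
    kle M k (s w).

From Stdlib Require Import List Arith Lia Classical FunctionalExtensionality Eqdep_dec.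
Import ListNotations.

(* Every sbLTL formula takes only the values 0 and 1, and the words on which it
   takes the value 1 form a safety set (a closed set of the Cantor topology):
   atoms depend on the first letter only, and disjunction, conjunction, shifts,
   box and weak until preserve closedness.  Since every weight k_i >= k is
   non-zero, a k-stLTL formula has value >= k exactly when one of its sbLTL
   disjuncts has value 1, so the words where its value is >= k form a finite
   union of safety sets, hence a safety set, which is k-safety. *)

Section Safety.
Context {AP : Type}.

Definition safety (L : word AP -> Prop) : Prop :=
  forall w, (forall i, exists v, L v /\ forall n, n < i -> v n = w n) -> L w.

Lemma safety_ext (A B : word AP -> Prop) :
  (forall w, A w <-> B w) -> safety A -> safety B.
Proof.
  intros E HA w H. apply E, HA. intros i. destruct (H i) as [v [Hv Hvw]].
  exists v. split; [apply E|]; auto.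
Qed.

Lemma safety_head (L : (AP -> bool) -> Prop) : safety (fun w => L (w 0)).
Proof.
  intros w H. destruct (H 1) as [v [Hv Hvw]]. rewrite <- (Hvw 0) by lia. exact Hv.
Qed.

Lemma safety_or (A B : word AP -> Prop) :
  safety A -> safety B -> safety (fun w => A w \/ B w).
Proof.
  intros HA HB w H.
  destruct (classic (forall i, exists v, A v /\ forall n, n < i -> v n = w n)) as [HAw|HAw].
  - left. apply HA, HAw.
  - right. apply not_all_ex_not in HAw. destruct HAw as [i0 Hi0]. apply HB. intros i.
    destruct (H (max i i0)) as [v [[Hv|Hv] Hvw]].
    + exfalso. apply Hi0. exists v. split; auto. intros n Hn. apply Hvw. lia.
    + exists v. split; auto. intros n Hn. apply Hvw. lia.
Qed.

Lemma safety_and (A B : word AP -> Prop) :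
  safety A -> safety B -> safety (fun w => A w /\ B w).
Proof.
  intros HA HB w H. split; [apply HA | apply HB]; intros i;
    destruct (H i) as [v [[HAv HBv] Hvw]]; exists v; auto.
Qed.

Lemma safety_forall (X : Type) (L : X -> word AP -> Prop) :
  (forall x, safety (L x)) -> safety (fun w => forall x, L x w).
Proof.
  intros HL w H x. apply HL. intros i. destruct (H i) as [v [Hv Hvw]]. exists v; auto.
Qed.

Lemma safety_suffix (L : word AP -> Prop) (n : nat) :
  safety L -> safety (fun w => L (suffix w n)).
Proof.
  intros HL w H. apply HL. intros i. destruct (H (i + n)) as [v [Hv Hvw]].
  exists (suffix v n). split; auto. intros m Hm. apply Hvw. lia.
Qed.

Lemma safety_exists_list (T : Type) (L : T -> word AP -> Prop) (l : list T) :
  (forall x, In x l -> safety (L x)) -> safety (fun w => exists x, In x l /\ L x w).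
Proof.
  induction l as [|x l IH]; intros Hl.
  - intros w H. destruct (H 0) as [v [[x [[] _]] _]].
  - eapply safety_ext;
      [|exact (safety_or _ _ (Hl x (or_introl eq_refl)) (IH (fun y Hy => Hl y (or_intror Hy))))].
    intros w. split.
    + intros [Hx|[y [Hy Hyw]]]; [exists x | exists y]; simpl; auto.
    + intros [y [[<-|Hy] Hyw]]; [left | right; exists y]; auto.
Qed.

(* A weak until is the conjunction over n of its "truncations at n", each of
   which is a finite combination of safety sets. *)
Lemma safety_weak_until (A B : nat -> word AP -> Prop) :
  (forall j, safety (A j)) -> (forall j, safety (B j)) ->
  safety (fun w => (forall n, A n w) \/
                   exists i, (forall j, j < i -> A j w) /\ B i w).
Proof.
  intros HA HB.
  apply safety_ext with (A := fun w => forall n,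
    (forall j, j <= n -> A j w) \/
    exists i, In i (seq 0 (S n)) /\ (B i w /\ forall j, j < i -> A j w)).
  - intros w. split.
    + intros H. destruct (classic (forall n, A n w)) as [Hall|Hall]; [left; exact Hall|].
      right. apply not_all_ex_not in Hall. destruct Hall as [n0 Hn0].
      destruct (H n0) as [Hle|[i [_ [HBi HAi]]]].
      * exfalso. apply Hn0, Hle. lia.
      * exists i. auto.
    + intros [Hall|[i [HAi HBi]]] n; [left; auto|].
      destruct (le_lt_dec i n) as [Hin|Hni].
      * right. exists i. rewrite in_seq. split; [lia | auto].
      * left. intros j Hj. apply HAi. lia.
  - apply safety_forall. intros n. apply safety_or.
    + apply safety_forall. intros j. apply safety_forall. intros _. apply HA.
    + apply safety_exists_list. intros i _. apply safety_and; [apply HB|].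
      apply safety_forall. intros j. apply safety_forall. intros _. apply HA.
Qed.

Lemma k_safe_of_safety (K : Type) (M : TGPValMonoid K) (k : K) (s : word AP -> K) :
  safety (fun w => kle M k (s w)) -> k_safe M k s.
Proof.
  intros Hs w Hw. apply Hs. intros i. destruct (Hw (S i)) as [u Hu]; [lia|].
  exists (prefix_concat w (S i) u). split; [exact Hu|].
  intros n Hn. unfold prefix_concat. rewrite (proj2 (Nat.ltb_lt n (S i))) by lia.
  reflexivity.
Qed.

End Safety.

Section BooleanValues.
Context {K : Type} (M : TGPValMonoid K).

Definition is_bool (x : K) : Prop := x = zero M \/ x = one M.

Lemma zero_neq_one_of_nonzero (k : K) : k <> zero M -> zero M <> one M.
Proof.
  intros Hk E. apply Hk. rewrite <- (mul_one_r K M k), <- E, mul_zero_r. reflexivity.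
Qed.

Lemma Sum_const_zero (I : Type) : Sum M I (fun _ => zero M) = zero M.
Proof.
  transitivity (Sum M I (fun _ => mul M (zero M) (one M))).
  - f_equal. extensionality i. symmetry. apply mul_zero_l.
  - rewrite sum_scal. apply mul_zero_l.
Qed.

Lemma Sum_split (I : Type) (P : I -> bool) (f : I -> K) :
  Sum M I f = plus M (Sum M {x | P x = true} (fun x => f (proj1_sig x)))
                     (Sum M {x | P x = false} (fun x => f (proj1_sig x))).
Proof.
  transitivity (Sum M bool (fun b => Sum M {x | P x = b} (fun x => f (proj1_sig x))));
    [|apply sum_pair].
  rewrite <- (sum_partition K M bool (fun b => {x | P x = b}) (fun _ x => f (proj1_sig x))).
  symmetry.
  apply (sum_bij K M I _ (fun p => proj1_sig (projT2 p))
                         (fun x => existT _ (P x) (exist _ x eq_refl))).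
  - reflexivity.
  - intros [b [x e]]. destruct e. reflexivity.
Qed.

(* [one] absorbs every summand, by the axiom [le_one]. *)
Lemma Sum_nat_one (f : nat -> K) (i : nat) : f i = one M -> Sum M nat f = one M.
Proof.
  intros Hi. rewrite (Sum_split nat (fun n => n =? i) f).
  rewrite (sum_single K M _ (exist _ i (Nat.eqb_refl i))).
  - simpl. rewrite Hi. symmetry. apply le_one.
  - intros [n e]. assert (n = i) as -> by (apply Nat.eqb_eq, e).
    f_equal. apply UIP_dec, Bool.bool_dec.
Qed.

Lemma fin_valued_bool (s : nat -> K) : (forall j, is_bool (s j)) -> fin_valued s.
Proof. intros Hs. exists [zero M; one M]. intros j. destruct (Hs j) as [-> | ->]; simpl; auto. Qed.

Lemma plus_is_bool (a b : K) : is_bool a -> is_bool b -> is_bool (plus M a b).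
Proof.
  intros [-> | ->] [-> | ->];
    rewrite ?plus_idem, ?plus_zero_l, ?(plus_comm K M (one M) (zero M)), ?plus_zero_l;
    [left | right ..]; reflexivity.
Qed.

Lemma mul_is_bool (a b : K) : is_bool a -> is_bool b -> is_bool (mul M a b).
Proof. intros [-> | ->] Hb; [left; apply mul_zero_l | rewrite mul_one_l; exact Hb]. Qed.

Lemma Val_is_bool (s : nat -> K) : (forall j, is_bool (s j)) -> is_bool (Val M s).
Proof.
  intros Hs. destruct (classic (exists j, s j = zero M)) as [Hz|Hz].
  - left. apply val_zero; [apply fin_valued_bool|]; assumption.
  - right. replace s with (fun _ : nat => one M); [apply val_ones|].
    extensionality j. destruct (Hs j) as [E|E]; [exfalso; apply Hz; exists j|]; auto.
Qed.

Lemma Sum_nat_is_bool (f : nat -> K) : (forall i, is_bool (f i)) -> is_bool (Sum M nat f).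
Proof.
  intros Hf. destruct (classic (exists i, f i = one M)) as [[i Hi]|Hn].
  - right. apply (Sum_nat_one f i Hi).
  - left. replace f with (fun _ : nat => zero M); [apply Sum_const_zero|].
    extensionality i. destruct (Hf i) as [E|E]; [|exfalso; apply Hn; exists i]; auto.
Qed.

Lemma until_seq_is_bool (a : nat -> K) (b : K) (i : nat) :
  (forall j, is_bool (a j)) -> is_bool b ->
  forall j, is_bool (if j <? i then a j else if j =? i then b else one M).
Proof.
  intros Ha Hb j. destruct (j <? i); [|destruct (j =? i)]; auto. right. reflexivity.
Qed.

Lemma until_seq_eq_one (a : nat -> K) (b : K) (i : nat) :
  (forall j, (if j <? i then a j else if j =? i then b else one M) = one M) <->
  (forall j, j < i -> a j = one M) /\ b = one M.
Proof.
  split.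
  - intros H. split.
    + intros j Hj. specialize (H j). rewrite (proj2 (Nat.ltb_lt j i) Hj) in H. exact H.
    + specialize (H i). rewrite Nat.ltb_irrefl, Nat.eqb_refl in H. exact H.
  - intros [Ha Hb] j. destruct (lt_eq_lt_dec j i) as [[Hlt|<-]|Hgt].
    + rewrite (proj2 (Nat.ltb_lt j i) Hlt). auto.
    + rewrite Nat.ltb_irrefl, Nat.eqb_refl. exact Hb.
    + rewrite (proj2 (Nat.ltb_ge j i)), (proj2 (Nat.eqb_neq j i)) by lia. reflexivity.
Qed.

Section NonTrivial.
Hypothesis zero_neq_one : zero M <> one M.

Lemma plus_eq_one (a b : K) :
  is_bool a -> is_bool b -> plus M a b = one M <-> a = one M \/ b = one M.
Proof.
  intros [-> | ->] [-> | ->];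
    rewrite ?plus_idem, ?plus_zero_l, ?(plus_comm K M (one M) (zero M)), ?plus_zero_l;
    intuition congruence.
Qed.

Lemma mul_eq_one (a b : K) :
  is_bool a -> is_bool b -> mul M a b = one M <-> a = one M /\ b = one M.
Proof.
  intros [-> | ->] Hb; rewrite ?mul_zero_l, ?mul_one_l; intuition congruence.
Qed.

Lemma Val_eq_one (s : nat -> K) :
  (forall j, is_bool (s j)) -> Val M s = one M <-> forall j, s j = one M.
Proof.
  intros Hs. split.
  - intros E j. destruct (Hs j) as [Z|O]; [|exact O]. exfalso. apply zero_neq_one.
    rewrite <- E. symmetry. apply val_zero; [apply fin_valued_bool, Hs | exists j; exact Z].
  - intros H. replace s with (fun _ : nat => one M) by (extensionality j; auto).
    apply val_ones.
Qed.

Lemma Sum_nat_eq_one (f : nat -> K) :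
  (forall i, is_bool (f i)) -> Sum M nat f = one M <-> exists i, f i = one M.
Proof.
  intros Hf. split; [|intros [i Hi]; apply (Sum_nat_one f i Hi)].
  intros E. apply NNPP. intros Hn. apply zero_neq_one. rewrite <- E, <- (Sum_const_zero nat).
  f_equal. extensionality i. destruct (Hf i) as [Z|O]; [|exfalso; apply Hn; exists i]; auto.
Qed.

End NonTrivial.

Lemma kle_plus (k a b : K) : kle M k (plus M a b) <-> kle M k a \/ kle M k b.
Proof.
  unfold kle. split.
  - intros H. destruct (le_total K M a b) as [E|E].
    + right. rewrite (plus_comm K M a b), <- E in H. exact H.
    + left. rewrite <- E in H. exact H.
  - intros [Ha|Hb].
    + rewrite <- plus_assoc, (plus_comm K M b k), plus_assoc, <- Ha. reflexivity.
    + rewrite <- plus_assoc, <- Hb. reflexivity.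
Qed.

Lemma kle_mul_bool (k c s : K) :
  k <> zero M -> kle M k c -> is_bool s -> kle M k (mul M c s) <-> s = one M.
Proof.
  intros Hk Hc [-> | ->].
  - rewrite mul_zero_r. unfold kle. rewrite plus_zero_l. split; intros E.
    + exfalso. apply Hk. auto.
    + exfalso. exact (zero_neq_one_of_nonzero k Hk E).
  - rewrite mul_one_r. tauto.
Qed.

End BooleanValues.

Section SafetyFragment.
Context {K AP : Type} (M : TGPValMonoid K).

Definition sat (phi : formula K AP) (w : word AP) : Prop := sem M phi w = one M.

Definition bool_valued (phi : formula K AP) : Prop := forall w, is_bool M (sem M phi w).

Lemma bool_valued_box (p : formula K AP) : bool_valued p -> bool_valued (FBox p).
Proof. intros Hp w. apply Val_is_bool. intros j. apply Hp. Qed.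

Lemma bool_valued_until (p q : formula K AP) :
  bool_valued p -> bool_valued q -> bool_valued (FUntil p q).
Proof.
  intros Hp Hq w. apply Sum_nat_is_bool. intros i.
  apply Val_is_bool, until_seq_is_bool; intros; [apply Hp | apply Hq].
Qed.

Lemma sbLTL_bool_valued (phi : formula K AP) : sbLTL M phi -> bool_valued phi.
Proof.
  induction 1 as [| a | a | p q _ Hp _ Hq | p q _ Hp _ Hq | p _ Hp | p q _ Hp _ Hq | p _ Hp];
    intros w.
  - right. reflexivity.
  - simpl. destruct (w 0 a); [right | left]; reflexivity.
  - simpl. destruct (w 0 a); [left | right]; reflexivity.
  - apply plus_is_bool; [apply Hp | apply Hq].
  - apply mul_is_bool; [apply Hp | apply Hq].
  - apply Hp.
  - apply plus_is_bool; [apply bool_valued_box | apply bool_valued_until]; assumption.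
  - apply bool_valued_box, Hp.
Qed.

Hypothesis zero_neq_one : zero M <> one M.

Lemma sat_box (p : formula K AP) (w : word AP) :
  bool_valued p -> sat (FBox p) w <-> forall n, sat p (suffix w n).
Proof. intros Hp. apply Val_eq_one; [exact zero_neq_one | intros j; apply Hp]. Qed.

Lemma sat_until (p q : formula K AP) (w : word AP) :
  bool_valued p -> bool_valued q ->
  sat (FUntil p q) w <->
  exists i, (forall j, j < i -> sat p (suffix w j)) /\ sat q (suffix w i).
Proof.
  intros Hp Hq.
  assert (Hseq : forall i j, is_bool M (if j <? i then sem M p (suffix w j)
                                     else if j =? i then sem M q (suffix w i) else one M))
    by (intros i; apply until_seq_is_bool; [intros j; apply Hp | apply Hq]).
  unfold sat. simpl.
  rewrite Sum_nat_eq_one by (exact zero_neq_one || intros i; apply Val_is_bool, Hseq).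
  split; intros [i Hi]; exists i.
  - apply until_seq_eq_one, (Val_eq_one M zero_neq_one _ (Hseq i)), Hi.
  - apply (Val_eq_one M zero_neq_one _ (Hseq i)), until_seq_eq_one, Hi.
Qed.

Lemma sat_relU (p q : formula K AP) (w : word AP) :
  bool_valued p -> bool_valued q ->
  sat (FRelU p q) w <->
  (forall n, sat p (suffix w n)) \/
  exists i, (forall j, j < i -> sat p (suffix w j)) /\ sat q (suffix w i).
Proof.
  intros Hp Hq. unfold FRelU, sat at 1. simpl sem at 1.
  rewrite plus_eq_one
    by (exact zero_neq_one || apply bool_valued_box || apply bool_valued_until; assumption).
  rewrite <- sat_box, <- sat_until by assumption. reflexivity.
Qed.

Lemma sbLTL_safety (phi : formula K AP) : sbLTL M phi -> safety (sat phi).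
Proof.
  induction 1 as [| a | a | p q Hp IHp Hq IHq | p q Hp IHp Hq IHq | p Hp IHp
                  | p q Hp IHp Hq IHq | p Hp IHp].
  - intros w _. reflexivity.
  - exact (safety_head (fun l => (if l a then one M else zero M) = one M)).
  - exact (safety_head (fun l => (if l a then zero M else one M) = one M)).
  - apply safety_ext with (A := fun w => sat p w \/ sat q w); [|apply safety_or; assumption].
    intros w. symmetry. apply plus_eq_one; [| apply sbLTL_bool_valued ..]; assumption.
  - apply safety_ext with (A := fun w => sat p w /\ sat q w); [|apply safety_and; assumption].
    intros w. symmetry. apply mul_eq_one; [| apply sbLTL_bool_valued ..]; assumption.
  - exact (safety_suffix _ 1 IHp).
  - eapply safety_ext.
    { intros w. symmetry. apply sat_relU; apply sbLTL_bool_valued; assumption. }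
    apply (safety_weak_until (fun j w => sat p (suffix w j)) (fun j w => sat q (suffix w j)));
      intros j; apply safety_suffix; assumption.
  - eapply safety_ext.
    { intros w. symmetry. apply sat_box, sbLTL_bool_valued, Hp. }
    apply (safety_forall _ (fun n w => sat p (suffix w n))).
    intros n. apply safety_suffix, IHp.
Qed.

End SafetyFragment.

Lemma kle_bigOr {K AP : Type} (M : TGPValMonoid K) (k : K) (hk0 : k <> zero M)
  (d : K * formula K AP) (l : list (K * formula K AP)) :
  (forall p, In p (d :: l) -> kle M k (fst p) /\ bool_valued M (snd p)) ->
  forall w, kle M k (sem M (bigOr d l) w) <-> exists p, In p (d :: l) /\ sat M (snd p) w.
Proof.
  revert d. induction l as [|d' l IH]; intros d Hl w;
    destruct (Hl d (or_introl eq_refl)) as [Hkd Hd].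
  - simpl. rewrite kle_mul_bool by auto.
    split; [intros E; exists d; auto | intros [p [[<-|[]] E]]; exact E].
  - simpl bigOr. simpl sem. rewrite kle_plus, kle_mul_bool by auto.
    rewrite (IH d' (fun p Hp => Hl p (or_intror Hp)) w). split.
    + intros [E|[p [Hp E]]]; [exists d | exists p]; simpl; auto.
    + intros [p [[<-|Hp] E]]; [left | right; exists p]; auto.
Qed.

Theorem lemma8 (K : Type) (M : TGPValMonoid K) (AP : Type) (HAP : finite_type AP)
  (k : K) (hk0 : k <> zero M) (hk1 : k <> one M) (phi : formula K AP) :
  kstLTL M k phi -> k_safe M k (sem M phi).
Proof.
  intros [d [l [-> Hl]]].
  assert (zero_neq_one : zero M <> one M) by exact (zero_neq_one_of_nonzero M k hk0).
  assert (Hsb : forall p, In p (d :: l) -> sbLTL M (snd p))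
    by (intros p Hp; apply (Hl p Hp)).
  apply k_safe_of_safety.
  eapply safety_ext.
  { intros w. symmetry. apply kle_bigOr; [exact hk0|].
    intros p Hp. split; [apply (Hl p Hp) | apply sbLTL_bool_valued, Hsb, Hp]. }
  apply safety_exists_list. intros p Hp. apply sbLTL_safety; [exact zero_neq_one | apply Hsb, Hp].
Qed.
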